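(* Let $G$ be a finite group, let $e=c_0,c_1,\dots,c_\ell$ be representatives of its conjugacy classes, and let $\gamma$ be any (not necessarily faithful) $n$-dimensional complex representation of $G$ with character $\chi_\gamma$. Then \[ \frac{1}{|G|}\prod_{i=1}^{\ell}\bigl(n-\chi_\gamma(c_i)\bigr)\in\mathbb{Z}_{\ge 0}. \] *)

From HB Require Import structures.
From mathcomp Require Import all_boot all_order all_algebra all_fingroup all_solvable all_field all_character.
Set Implicit Arguments. Unset Strict Implicit. Unset Printing Implicit Defensive.

From HB Require Import structures.
From mathcomp Require Import all_boot all_order all_algebra all_fingroup all_solvable all_field all_character.
Import GRing.Theory Num.Theory.
Local Open Scope ring_scope.

(* Let Q be the product of the X - chi(c) over the nontrivial classes c.
   Multiplying by (X - chi(1)) gives the characteristic polynomial of the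
   integer matrix of multiplication by chi on the irreducible characters,
   which the character table diagonalizes; so Q has integer coefficients.
   As Q vanishes at chi(x) for x <> 1, the product Q(chi(1)) equals
   sum_{x in G} Q(chi(x)) = |G| sum_k Q_k [chi^k, 1], a multiple of |G|.
   It is nonnegative because inversion pairs each class with one carrying
   the complex-conjugate factor, and on self-inverse classes chi is real,
   hence at most chi(1). *)

Lemma prodr_ge0_conj_involution (C : numClosedFieldType) (T : finType)
    (P : pred T) (i : T -> T) (f : T -> C) :
    involutive i -> (forall x, P (i x) = P x) ->
    (forall x, P x -> f (i x) = (f x)^*) ->
    (forall x, P x -> i x = x -> 0 <= f x) ->
  0 <= \prod_(x | P x) f x.
Proof.
move=> iK Pi fi f_fix; pose r (x : T) : nat := enum_rank x.
(* Ranks select one element of each 2-cycle of i; paired factors give |f x|^2. *)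
rewrite (bigID (fun x => (r x < r (i x))%N)) /=.
rewrite [X in _ * X](bigID (fun x => (r (i x) < r x)%N)) /= mulrA.
rewrite mulr_ge0 //; last first.
  apply: prodr_ge0 => x /andP[/andP[Px]]; rewrite -!leqNgt => le1 le2.
  apply: f_fix => //; apply/enum_rank_inj/val_inj/eqP.
  by rewrite eqn_leq le1 le2.
have -> : \prod_(x | P x && ~~ (r x < r (i x))%N && (r (i x) < r x)%N) f x
    = \prod_(x | P x && (r x < r (i x))%N) (f x)^*.
  rewrite (reindex_inj (inv_inj iK)) /=.
  apply: eq_big => x.
    by rewrite iK Pi; case: (ltngtP (r x) (r (i x))); rewrite ?andbT ?andbF.
  by rewrite Pi => /andP[/andP[Px _] _]; apply: fi.
by rewrite -big_split /= prodr_ge0 // => x _; rewrite -normCK exprn_ge0.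
Qed.

Lemma char_poly_similar {F : fieldType} {m : nat} {A B P : 'M[F]_m} :
  P \in unitmx -> P *m A = B *m P -> char_poly A = char_poly B.
Proof.
move=> uP PA_BP; pose Px := map_mx (@polyC F) P.
have PxA_BPx : char_poly_mx B *m Px = Px *m char_poly_mx A.
  rewrite /char_poly_mx mulmxBl mulmxBr mul_scalar_mx mul_mx_scalar.
  by rewrite /Px -!map_mxM PA_BP.
have detPx_neq0 : (\det P)%:P != 0 by rewrite polyC_eq0 -unitfE -unitmxE.
move/(congr1 determinant): PxA_BPx; rewrite !det_mulmx /Px det_map_mx /=.
by rewrite mulrC => /(mulfI detPx_neq0).
Qed.

Lemma polyOver_int_char_poly (R : archiNumDomainType) (m : nat) (A : 'M[R]_m) :
  A \is a mxOver Num.int -> char_poly A \is a polyOver Num.int.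
Proof.
move=> /mxOverP Aint.
have -> : A = map_mx intr (map_mx Num.floor A).
  by apply/matrixP => i j; rewrite !mxE floorK.
by rewrite -map_char_poly; apply/polyOverP => k; rewrite coef_map rpred_int.
Qed.

Lemma polyOver_int_divXsubC {R : archiNumDomainType} {p : {poly R}} {c : R} :
    c \is a Num.int -> p * ('X - c%:P) \is a polyOver Num.int ->
  p \is a polyOver Num.int.
Proof.
move=> cint /floorpK; set q := map_poly Num.floor _ => qK.
have /factor_theorem[p' def_q] : root q (Num.floor c).
  rewrite /root -(intr_eq0 R) -horner_map qK /= (floorK cint).
  by rewrite hornerM hornerXsubC subrr mulr0.
have -> : p = map_poly intr p'.
  apply: (mulIf (negbT (polyXsubC_eq0 c))).
  by rewrite -qK def_q rmorphM /= map_polyXsubC /= (floorK cint).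
by apply/polyOverP => k; rewrite coef_map rpred_int.
Qed.

Section ClassValues.

Variables (gT : finGroupType) (G : {group gT}).

Local Open Scope group_scope.
Local Open Scope ring_scope.

Definition cfMul_mx (phi : 'CF(G)) : 'M[algC]_(Nirr G) :=
  \matrix_(i, j) '[phi * 'chi_i, 'chi_j].

Lemma cfMul_mx_character_table (phi : 'CF(G)) :
  character_table G *m diag_mx (\row_j phi (repr (irr_class j)))
    = cfMul_mx phi *m character_table G.
Proof.
apply/matrixP => i k; rewrite mul_mx_diag !mxE mulrC.
have := congr1 (fun psi : 'CF(G) => psi (repr (irr_class k)))
  (cfun_sum_cfdot (phi * 'chi_i)).
by rewrite cfunE sum_cfunE => ->; apply: eq_bigr => j _; rewrite cfunE !mxE.
Qed.

Lemma char_poly_cfMul_mx (phi : 'CF(G)) :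
  char_poly (cfMul_mx phi) = \prod_(xG in classes G) ('X - (phi (repr xG))%:P).
Proof.
rewrite -(char_poly_similar (character_table_unit G) (cfMul_mx_character_table phi)).
rewrite char_poly_trig ?diag_mx_is_trig // reindex_irr_class.
by apply: eq_bigr => j _; rewrite !mxE eqxx mulr1n.
Qed.

Definition nontrivial_class_poly (phi : 'CF(G)) : {poly algC} :=
  \prod_(xG in classes G | xG != 1%g) ('X - (phi (repr xG))%:P).

Lemma polyOver_int_nontrivial_class_poly (phi : 'CF(G)) :
  phi \in 'Z[irr G] -> nontrivial_class_poly phi \is a polyOver Num.int.
Proof.
move=> Zphi; apply: (polyOver_int_divXsubC (Cint_vchar1 Zphi)).
rewrite -(cfun_repr phi 1%g) class1G mulrC.
rewrite -(bigD1 _ (classes1 G)) -char_poly_cfMul_mx polyOver_int_char_poly //.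
by apply/mxOverP => i j; rewrite mxE Cint_cfdot_vchar ?rpredM ?irr_vchar.
Qed.

Lemma horner_nontrivial_class_poly (phi : 'CF(G)) x :
  x \in G -> x != 1%g -> (nontrivial_class_poly phi).[phi x] = 0.
Proof.
move=> Gx ntx; rewrite horner_prod (bigD1 (x ^: G)) ?mem_classes //=.
  by rewrite hornerXsubC cfun_repr subrr mul0r.
by apply: contra ntx => /eqP xG1; have := class_refl G x; rewrite xG1 inE.
Qed.

Lemma horner1_nontrivial_class_poly (phi : 'CF(G)) :
  (nontrivial_class_poly phi).[phi 1%g]
    = \prod_(xG in classes G | xG != 1%g) (phi 1%g - phi (repr xG)).
Proof. by rewrite horner_prod; apply: eq_bigr => xG _; rewrite hornerXsubC. Qed.

Lemma mean_horner_vchar_int (p : {poly algC}) (phi : 'CF(G)) :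
    p \is a polyOver Num.int -> phi \in 'Z[irr G] ->
  #|G|%:R^-1 * \sum_(x in G) p.[phi x] \in Num.int.
Proof.
move=> /polyOverP p_int Zphi.
have -> : #|G|%:R^-1 * \sum_(x in G) p.[phi x]
    = \sum_(k < size p) p`_k * '[phi ^+ k, 1].
  under eq_bigr do rewrite horner_coef.
  rewrite exchange_big mulr_sumr; apply: eq_bigr => k _.
  rewrite cfdotE mulrCA -mulr_sumr; congr (_ * (_ * _)); apply: eq_bigr => x Gx.
  by rewrite exp_cfunE // cfun1E Gx conjC1 mulr1.
by rewrite rpred_sum // => k _; rewrite rpredM ?Cint_cfdot_vchar ?rpredX ?cfun1_vchar.
Qed.

Lemma prod_nontrivial_classes_vchar_int (phi : 'CF(G)) :
  phi \in 'Z[irr G] ->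
  #|G|%:R^-1 * \prod_(xG in classes G | xG != 1%g) (phi 1%g - phi (repr xG))
    \in Num.int.
Proof.
move=> Zphi; rewrite -horner1_nontrivial_class_poly.
have -> : (nontrivial_class_poly phi).[phi 1%g]
    = \sum_(x in G) (nontrivial_class_poly phi).[phi x].
  rewrite (bigD1 1%g) //= big1 ?addr0 // => x /andP[Gx ntx].
  exact: horner_nontrivial_class_poly.
by rewrite mean_horner_vchar_int ?polyOver_int_nontrivial_class_poly.
Qed.

Lemma prod_nontrivial_classes_char_ge0 (phi : 'CF(G)) :
  phi \is a character ->
  0 <= \prod_(xG in classes G | xG != 1%g) (phi 1%g - phi (repr xG)).
Proof.
move=> Nphi; have classesV xG : xG \in classes G -> (xG^-1)%g \in classes G.
  by case/imsetP => x Gx ->; rewrite -classVg mem_classes ?groupV.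
have phiV xG : xG \in classes G -> phi (repr xG^-1%g) = (phi (repr xG))^*.
  by case/imsetP => x Gx ->; rewrite -classVg !cfun_repr char_inv.
apply: (@prodr_ge0_conj_involution _ _ _ (fun xG : {set gT} => xG^-1)%g).
- exact: invgK.
- move=> xG; rewrite invg_eq1; congr andb.
  by apply/idP/idP => [/classesV | /classesV //]; rewrite invgK.
- move=> xG /andP[/phiV-> _].
  by rewrite rmorphB /= (conj_natr (Cnat_char1 Nphi)).
move=> xG /andP[/phiV phiV_xG _] xGV.
have phi_real : phi (repr xG) \is Num.real.
  by rewrite CrealE -phiV_xG xGV.
rewrite subr_ge0.
exact: Order.POrderTheory.le_trans (real_ler_norm phi_real) (char1_ge_norm _ Nphi).
Qed.

End ClassValues.

Theorem corollary2p6 (gT : finGroupType) (G : {group gT}) (n : nat)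
    (rG : mx_representation algC G n) :
  (#|G|%:R)^-1 * \prod_(xG in classes G | xG != 1%g) (n%:R - cfRepr rG (repr xG))
    \in Num.nat.
Proof.
have Nchi := cfRepr_char rG.
rewrite -(cfRepr1 rG) natrEint prod_nontrivial_classes_vchar_int ?char_vchar //.
by rewrite mulr_ge0 ?invr_ge0 ?ler0n ?prod_nontrivial_classes_char_ge0.
Qed.
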